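(* Let $w$ be a permutation with $\textsf{supp}(w)=X\sqcup Y$ such that either (1) every $x\in X$ commutes with every $y\in Y$ (i.e. $|x-y|\ne1$), in which case let $s$ be any reduced word of $w$; or (2) there is exactly one pair $(x_0,y_0)\in X\times Y$ of noncommuting letters (i.e. with $|x_0-y_0|=1$), and there is a reduced word $s$ of $w$ in which all occurrences of $x_0$ are to the left of all occurrences of $y_0$. Then the subwords $s_X$ and $s_Y$ of $s$ consisting of all letters from $X$, respectively $Y$, are reduced words, and $B(w)\cong B([s_X])\times B([s_Y])$ as posets.
   Context: $\sigma_i=(i,i+1)$; reduced words are sequences of subscripts of reduced expressions, and $[t]$ denotes the permutation represented by a word $t$. $\textsf{supp}(w)$ is the set of letters appearing in reduced words of $w$. $B(u)$ is the principal order ideal of $u$ in the Bruhat order. *)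

(* Symmetric group S_{n+1} = {perm 'I_n.+1}, generators
   sigma_i = (i, i+1) for i < n. *)
From Stdlib Require Import Relations.
From mathcomp Require Import all_boot all_fingroup.

Local Open Scope group_scope.

Definition sigma (n i : nat) : {perm 'I_n.+1} :=
  tperm (inord i : 'I_n.+1) (inord i.+1).

Definition word_perm (n : nat) (t : seq nat) : {perm 'I_n.+1} :=
  \prod_(i <- t) sigma n i.

(* Coxeter length = number of inversions *)
Definition perm_length (n : nat) (w : {perm 'I_n.+1}) : nat :=
  #|[set ij : 'I_n.+1 * 'I_n.+1 | (ij.1 < ij.2)%N && (w ij.2 < w ij.1)%N]|.

Definition valid_word (n : nat) (t : seq nat) : bool := all (fun i => i < n) t.

Definition reduced (n : nat) (t : seq nat) : Prop :=
  valid_word n t /\ size t = perm_length n (word_perm n t).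

Definition reduced_word_of (n : nat) (t : seq nat) (w : {perm 'I_n.+1}) : Prop :=
  reduced n t /\ word_perm n t = w.

Definition supp (n : nat) (w : {perm 'I_n.+1}) (i : nat) : Prop :=
  exists t, reduced_word_of n t w /\ i \in t.

Definition bruhat_step (n : nat) (u v : {perm 'I_n.+1}) : Prop :=
  exists i j : 'I_n.+1, i != j /\ v = u * tperm i j /\ perm_length n u < perm_length n v.

Definition bruhat_le (n : nat) : relation {perm 'I_n.+1} :=
  clos_refl_trans _ (bruhat_step n).

Definition Bideal (n : nat) (u : {perm 'I_n.+1}) : Type :=
  {x : {perm 'I_n.+1} | bruhat_le n x u}.

Definition poset_iso_prod (n : nat) (w a b : {perm 'I_n.+1}) : Prop :=
  exists f : Bideal n w -> (Bideal n a * Bideal n b)%type,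
    bijective f /\
    forall x y : Bideal n w,
      bruhat_le n (sval x) (sval y) <->
      (bruhat_le n (sval (f x).1) (sval (f y).1) /\
       bruhat_le n (sval (f x).2) (sval (f y).2)).

Definition commuting (x y : nat) : Prop := x.+1 <> y /\ y.+1 <> x.

(* Commutation lets every letter of Y be moved to the right of every letter of X, so
   [s] = [s_X] [s_Y]; as length is subadditive and |s_X| + |s_Y| = l(w), both subwords
   are reduced.  Words over the disjoint alphabets X and Y generate subgroups W_X and W_Y
   with trivial intersection, so a factorisation x = a b with a in W_X and b in W_Y is
   unique.  By the subword property, the elements below a b are exactly the products of
   subwords of reduced words of a and of b, and comparing two such products amounts to
   comparing their factors.  Hence (a, b) |-> a b is a poset isomorphism
   B([s_X]) x B([s_Y]) -> B(w). *)

From mathcomp Require Import all_boot all_fingroup zify.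
From Stdlib Require Import Relations ProofIrrelevance IndefiniteDescription.

Set Implicit Arguments.
Unset Strict Implicit.
Unset Printing Implicit Defensive.

Local Open Scope group_scope.

Lemma all_subseq (T : eqType) (P : pred T) (s1 s2 : seq T) :
  subseq s1 s2 -> all P s2 -> all P s1.
Proof. by move=> s12 /allP P2; apply/allP => x /(mem_subseq s12); apply: P2. Qed.

Definition rem_nth (T : Type) k (s : seq T) := take k s ++ drop k.+1 s.

Lemma rem_nth_subseq (T : eqType) k (s : seq T) : subseq (rem_nth k s) s.
Proof.
rewrite -{2}(cat_take_drop k s); apply: cat_subseq => //.
by rewrite -add1n -drop_drop drop_subseq.
Qed.

Lemma size_rem_nth (T : Type) k (s : seq T) :
  k < size s -> size (rem_nth k s) = (size s).-1.
Proof. by move=> ks; rewrite size_cat size_take size_drop ks; lia. Qed.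

Lemma subseq_rcons_inv (T : eqType) (t s : seq T) c : subseq t (rcons s c) ->
  subseq t s \/ exists2 t', t = rcons t' c & subseq t' s.
Proof.
rewrite -subseq_rev rev_rcons; case et: (rev t) => [|x r].
  by move=> _; left; rewrite -[t]revK et sub0seq.
rewrite /=; case: eqP => [<-|_] h; last by left; rewrite -subseq_rev et.
by right; exists (rev r); rewrite -?rev_cons -?et ?revK // -subseq_rev revK.
Qed.

Lemma subseq_cat_split (T : eqType) (t s1 s2 : seq T) : subseq t (s1 ++ s2) ->
  exists t1 t2, [/\ t = t1 ++ t2, subseq t1 s1 & subseq t2 s2].
Proof.
case/subseqP => m sm ->; exists (mask (take (size s1) m) s1), (mask (drop (size s1) m) s2).
rewrite -mask_cat ?cat_take_drop ?mask_subseq //.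
by rewrite size_take size_cat in sm *; rewrite sm; case: ltnP; lia.
Qed.

Lemma size_filter_disjoint (T : eqType) (X Y : pred T) s :
  (forall i, ~ (X i /\ Y i)) -> all (predU X Y) s ->
  size (filter X s) + size (filter Y s) = size s.
Proof.
move=> disjXY XYs; rewrite !size_filter -count_predUI.
rewrite (eq_in_count (a2 := predT)) ?count_predT; last exact/allP.
rewrite (eq_count (a2 := pred0)) ?count_pred0 ?addn0 // => i /=.
by apply/negP => /andP[Xi Yi]; apply: (disjXY i).
Qed.

Lemma bool_switch (g : nat -> bool) N :
  g 0 -> ~~ g N -> exists2 m, m < N & g m && ~~ g m.+1.
Proof.
elim: N => [->//|N IH] g0 gN; case gN': (g N); first by exists N; rewrite ?gN'.
by have [m mN gm] := IH g0 (negbT gN'); exists m => //; apply: ltnW.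
Qed.

Lemma ord_perm_neq m (p : {perm 'I_m}) (i j : 'I_m) : (i < j)%N -> p i <> p j :> nat.
Proof. by move=> ij /val_inj/perm_inj eij; move: ij; rewrite eij ltnn. Qed.

Lemma perm_eq1_of_le m (p : {perm 'I_m}) : (forall z, (p z <= z)%N) -> p = 1.
Proof.
move=> le_p; apply/permP => z; rewrite perm1.
have [k] := ubnP z; elim: k z => // k IH z zk.
case: (ltngtP (p z) z) => [lt|gt|/val_inj //]; last by move: (le_p z); rewrite leqNgt gt.
have /perm_inj pz : p (p z) = p z by apply: IH; lia.
by move: lt; rewrite pz ltnn.
Qed.

Section SimpleTranspositions.

Variable n : nat.
Implicit Types (a c : nat) (t : seq nat).

Lemma word_perm_nil : word_perm n [::] = 1.
Proof. by rewrite /word_perm big_nil. Qed.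

Lemma word_perm_cons c t : word_perm n (c :: t) = sigma n c * word_perm n t.
Proof. by rewrite /word_perm big_cons. Qed.

Lemma word_perm_cat t1 t2 : word_perm n (t1 ++ t2) = word_perm n t1 * word_perm n t2.
Proof. by rewrite /word_perm big_cat. Qed.

Lemma word_perm_rcons t c : word_perm n (rcons t c) = word_perm n t * sigma n c.
Proof. by rewrite -cats1 word_perm_cat word_perm_cons word_perm_nil mulg1. Qed.

Lemma sigmaV a : (sigma n a)^-1 = sigma n a.
Proof. exact: tpermV. Qed.

Lemma sigma2 a : sigma n a * sigma n a = 1.
Proof. exact: tperm2. Qed.

Lemma word_perm_rev t : word_perm n (rev t) = (word_perm n t)^-1.
Proof.
elim: t => [|c t IH]; first by rewrite word_perm_nil invg1.
by rewrite rev_cons word_perm_rcons IH word_perm_cons invMg sigmaV.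
Qed.

Lemma val_inord_letter a : a < n -> nat_of_ord (inord a : 'I_n.+1) = a.
Proof. by move=> an; rewrite inordK // ltnW. Qed.

Lemma val_inord_succ a : a < n -> nat_of_ord (inord a.+1 : 'I_n.+1) = a.+1.
Proof. by move=> an; rewrite inordK. Qed.

Lemma inord_letter_lt a : a < n -> ((inord a : 'I_n.+1) < (inord a.+1 : 'I_n.+1))%N.
Proof. by move=> an; rewrite (val_inord_succ an) (val_inord_letter an). Qed.

Lemma sigma_val a (R : 'I_n.+1) : a < n ->
  nat_of_ord (sigma n a R) =
  if R == a :> nat then a.+1 else if R == a.+1 :> nat then a else R.
Proof.
move=> an; have vA := val_inord_letter an; have vB := val_inord_succ an.
rewrite /sigma; case: tpermP => [->|->|RA RB]; rewrite ?vA ?vB ?eqxx //.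
  by case: eqP => //; lia.
case: (R =P a :> nat) => [eRa|_]; first by case: RA; rewrite -eRa inord_val.
by case: (R =P a.+1 :> nat) => // eRa; case: RB; rewrite -eRa inord_val.
Qed.

Lemma sigma_id a (R : 'I_n.+1) :
  a < n -> R != a :> nat -> R != a.+1 :> nat -> sigma n a R = R.
Proof. by move=> an RA RB; apply/val_inj; rewrite /= sigma_val // (negbTE RA) (negbTE RB). Qed.

Lemma sigma_inversion a (P Q : 'I_n.+1) : a < n -> (P < Q)%N ->
  (sigma n a Q < sigma n a P)%N -> P = inord a /\ Q = inord a.+1.
Proof.
move=> an PQ; rewrite !sigma_val // => QP.
suff [<- <-] : nat_of_ord P = a /\ nat_of_ord Q = a.+1 by rewrite !inord_val.
by move: QP; repeat case: ifP => [/eqP ?|_]; lia.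
Qed.

Lemma sigma_commute a c : a < n -> c < n -> commuting a c ->
  sigma n a * sigma n c = sigma n c * sigma n a.
Proof.
move=> an cn [ac ca]; have [->//|neq_ac] := eqVneq a c.
have fix_c : sigma n a (inord c) = inord c /\ sigma n a (inord c.+1) = inord c.+1.
  by split; apply: sigma_id; rewrite // ?(val_inord_succ cn) ?(val_inord_letter cn); lia.
have := tpermJ (inord c) (inord c.+1) (sigma n a).
rewrite /conjg sigmaV fix_c.1 fix_c.2 -/(sigma n c) => conj_c.
by rewrite -[in RHS]conj_c -!mulgA sigma2 mulg1.
Qed.

Lemma sigma_commute_word c t : c < n -> valid_word n t ->
  (forall a, a \in t -> commuting a c) ->
  sigma n c * word_perm n t = word_perm n t * sigma n c.
Proof.
move=> cn; elim: t => [|a t IH]; first by rewrite word_perm_nil mulg1 mul1g.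
move=> /andP[an vt] comm_t; have comm_a := comm_t a (mem_head a t).
rewrite word_perm_cons mulgA -sigma_commute // -mulgA IH ?mulgA // => b bt.
by apply: comm_t; rewrite in_cons bt orbT.
Qed.

Lemma word_perm_filter_split (X Y : pred nat) s : valid_word n s -> all (predU X Y) s ->
  (forall i, ~ (X i /\ Y i)) ->
  (forall p q, p < q < size s -> Y (nth 0 s p) -> X (nth 0 s q) ->
     commuting (nth 0 s q) (nth 0 s p)) ->
  word_perm n s = word_perm n (filter X s) * word_perm n (filter Y s).
Proof.
move=> + + disjXY; elim: s => [|c s IH]; first by rewrite !word_perm_nil mulg1.
move=> /andP[cn vs] /andP[XYc XYs] comm_s.
rewrite word_perm_cons IH // => [|p q pq]; last exact: (comm_s p.+1 q.+1).
rewrite /=; case: ifP => Xc.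
  have -> : Y c = false by apply/negP => Yc; apply: (disjXY c).
  by rewrite word_perm_cons mulgA.
have Yc : Y c by move: XYc; rewrite /= Xc.
rewrite Yc word_perm_cons !mulgA sigma_commute_word //.
  exact: all_subseq (filter_subseq X s) vs.
move=> a; rewrite mem_filter => /andP[Xa a_s].
by have := comm_s 0 (index a s).+1; rewrite /= ltnS index_mem nth_index //; apply.
Qed.

Lemma word_perm_le_letter t k (z : 'I_n.+1) : valid_word n t -> k \notin t ->
  (z <= k)%N -> (word_perm n t z <= k)%N.
Proof.
elim: t z => [|c t IH] z; first by rewrite word_perm_nil perm1.
rewrite /valid_word /= in_cons negb_or => /andP[cn vt] /andP[kc kt] zk.
rewrite word_perm_cons permM; apply: IH => //; rewrite sigma_val //.
by repeat case: ifP => [/eqP ?|_]; lia.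
Qed.

End SimpleTranspositions.

Section Length.

Variable n : nat.
Implicit Types (a c : nat) (t : seq nat) (y : {perm 'I_n.+1}).

Definition inversions y :=
  [set ij : 'I_n.+1 * 'I_n.+1 | (ij.1 < ij.2)%N && (y ij.2 < y ij.1)%N].

Lemma perm_lengthE y : perm_length n y = #|inversions y|.
Proof. by []. Qed.

Lemma perm_length1 : perm_length n 1 = 0.
Proof.
apply/eqP; rewrite perm_lengthE cards_eq0; apply/eqP/setP => -[i j].
by rewrite !inE !perm1 /=; case: ltngtP.
Qed.

Lemma inversions_mul_sigma y a : a < n ->
  (y^-1 (inord a) < y^-1 (inord a.+1))%N ->
  inversions (y * sigma n a) = (y^-1 (inord a), y^-1 (inord a.+1)) |: inversions y.
Proof.
move=> an up; apply/setP => -[i j]; rewrite !inE /= !permM.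
have [[-> ->]|ne] := eqVneq (i, j) (y^-1 (inord a), y^-1 (inord a.+1)).
  rewrite up !permKV /sigma tpermL tpermR /=.
  by rewrite (val_inord_letter an) (val_inord_succ an) ltnSn.
case: (ltnP i j) => //= ij.
have yij := ord_perm_neq (p := y) ij; have syij := ord_perm_neq (p := y * sigma n a) ij.
rewrite !permM in syij; apply/idP/idP => lt.
  case: (ltngtP (y j) (y i)) => // [gt|/esym//].
  have [eI eJ] := sigma_inversion an gt lt.
  by move: ne; rewrite -eI -eJ !permK eqxx.
case: (ltngtP (sigma n a (y j)) (sigma n a (y i))) => // [gt|/esym//].
have [eJ eI] := sigma_inversion an lt gt.
by move: up; rewrite -eI -eJ !permK; lia.
Qed.

Lemma perm_length_mul_sigma_up y a : a < n ->
  (y^-1 (inord a) < y^-1 (inord a.+1))%N ->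
  perm_length n (y * sigma n a) = (perm_length n y).+1.
Proof.
move=> an up; rewrite !perm_lengthE inversions_mul_sigma // cardsU1 inE /= !permKV.
by rewrite (val_inord_succ an) (val_inord_letter an) (leq_gtF (leqnSn a)) andbF add1n.
Qed.

Lemma perm_length_mul_sigma y a : a < n ->
  if (y^-1 (inord a) < y^-1 (inord a.+1))%N
  then perm_length n (y * sigma n a) = (perm_length n y).+1
  else (perm_length n (y * sigma n a)).+1 = perm_length n y.
Proof.
move=> an; case: ifP => [|down]; first exact: perm_length_mul_sigma_up.
have up : ((y * sigma n a)^-1 (inord a) < (y * sigma n a)^-1 (inord a.+1))%N.
  rewrite invMg !permM sigmaV /sigma tpermL tpermR.
  have /eqP := ord_perm_neq (p := y^-1) (inord_letter_lt an).
  by rewrite neq_ltn down.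
by have := perm_length_mul_sigma_up an up; rewrite -mulgA sigma2 mulg1 => ->.
Qed.

Lemma perm_length_mul_sigma_le y a : a < n ->
  perm_length n (y * sigma n a) <= (perm_length n y).+1.
Proof. by move=> an; have := perm_length_mul_sigma y an; case: ifP; lia. Qed.

Lemma perm_length_mul_sigma_ge y a : a < n ->
  perm_length n y <= (perm_length n (y * sigma n a)).+1.
Proof. by move=> an; have := perm_length_mul_sigma y an; case: ifP; lia. Qed.

Lemma perm_length_word_le t : valid_word n t -> perm_length n (word_perm n t) <= size t.
Proof.
elim/last_ind: t => [|t c IH]; first by rewrite word_perm_nil perm_length1.
rewrite /valid_word all_rcons word_perm_rcons size_rcons => /andP[cn vt].
by apply: leq_trans (perm_length_mul_sigma_le _ cn) _; rewrite ltnS IH.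
Qed.

Lemma tperm_conj_sigma (i j : 'I_n.+1) : i.+1 < j ->
  tperm i j = sigma n i * tperm (inord i.+1) j * sigma n i.
Proof.
move=> ij; have i_n : i < n by have := ltn_ord j; lia.
have sj : sigma n i j = j by rewrite sigma_id //; lia.
have si' : sigma n i (inord i.+1) = i by rewrite /sigma inord_val tpermR.
by have := tpermJ (inord i.+1) j (sigma n i); rewrite /conjg sigmaV sj si' mulgA => <-.
Qed.

(* Induction on j - i: conjugating by sigma_i moves i one step closer to j. *)
Lemma perm_length_mul_tperm_up y (i j : 'I_n.+1) : (i < j)%N ->
  (y^-1 i < y^-1 j)%N -> perm_length n y < perm_length n (y * tperm i j).
Proof.
move=> ij; have [d] : exists d, nat_of_ord j = i + d.+1 by exists (j - i).-1; lia.
elim: d y i ij => [|d IH] y i ij ed lt; have i_n : i < n by have := ltn_ord j; lia.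
  have ej : j = inord i.+1 by rewrite -[LHS]inord_val ed addn1.
  have := perm_length_mul_sigma_up (y := y) i_n.
  by rewrite /sigma inord_val -ej => ->.
set i' : 'I_n.+1 := inord i.+1; set y1 := y * sigma n i.
have vi' : nat_of_ord i' = i.+1 by rewrite val_inord_succ.
have si : sigma n i i = i' by rewrite /sigma inord_val tpermL.
have si' : sigma n i i' = i by rewrite /sigma inord_val tpermR.
have y1_i' : y1^-1 i' = y^-1 i by rewrite invMg permM sigmaV si'.
have y1_j : y1^-1 j = y^-1 j by rewrite invMg permM sigmaV sigma_id //; lia.
have up1 : perm_length n y1 < perm_length n (y1 * tperm i' j).
  by apply: IH; rewrite ?vi' ?y1_i' ?y1_j //; lia.
rewrite (tperm_conj_sigma (i := i)) ?mulgA -/y1; last lia.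
have := perm_length_mul_sigma y i_n; rewrite inord_val -/i' -/y1.
case: ifP => [_|down] e1.
  by rewrite -ltnS (leq_trans _ (perm_length_mul_sigma_ge _ i_n)) // -e1.
rewrite perm_length_mul_sigma_up // ?inord_val -/i'; first by rewrite -e1 ltnS.
rewrite invMg !permM tpermV tpermL tpermD; last 2 first.
- by apply/eqP => /(congr1 (@nat_of_ord _)); rewrite vi'; lia.
- by apply/eqP => /(congr1 (@nat_of_ord _)); lia.
rewrite /y1 invMg !permM sigmaV si sigma_id //; try lia.
have := ord_perm_neq (p := y^-1) (_ : (i < i')%N); rewrite vi' => /(_ (ltnSn i)) /eqP.
by rewrite neq_ltn down /= => /ltn_trans; apply.
Qed.

Lemma perm_length_mul_tpermE y (i j : 'I_n.+1) : (i < j)%N ->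
  (perm_length n y < perm_length n (y * tperm i j)) = (y^-1 i < y^-1 j)%N.
Proof.
move=> ij; apply/idP/idP => [up|]; last exact: perm_length_mul_tperm_up.
have /eqP := ord_perm_neq (p := y^-1) ij; rewrite neq_ltn => /orP[//|down].
have : ((y * tperm i j)^-1 i < (y * tperm i j)^-1 j)%N.
  by rewrite invMg !permM tpermV tpermL tpermR.
move/(perm_length_mul_tperm_up ij); rewrite -mulgA tperm2 mulg1.
by rewrite ltnNge (ltnW up).
Qed.

Lemma strong_exchange t (i j : 'I_n.+1) : valid_word n t -> (i < j)%N ->
  ((word_perm n t)^-1 j < (word_perm n t)^-1 i)%N ->
  exists2 k, k < size t & word_perm n t * tperm i j = word_perm n (rem_nth k t).
Proof.
move=> vt ij inv; pose z m := word_perm n (drop m t).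
have [m mt /andP[gm gm1]] : exists2 m, m < size t &
    ((z m)^-1 j < (z m)^-1 i)%N && ~~ ((z m.+1)^-1 j < (z m.+1)^-1 i)%N.
  apply: bool_switch; first by rewrite /z drop0.
  by rewrite /z drop_size word_perm_nil invg1 !perm1 -leqNgt ltnW.
exists m => //; set c := nth 0 t m; set z' := z m.+1.
have cn : c < n by move/allP: vt; apply; rewrite mem_nth.
have ed : drop m t = c :: drop m.+1 t by rewrite /c -drop_nth.
have zm : z m = sigma n c * z' by rewrite /z ed word_perm_cons.
have up : (z'^-1 i < z'^-1 j)%N.
  by have /eqP := ord_perm_neq (p := z'^-1) ij; rewrite neq_ltn (negbTE gm1) orbF.
have [eP eQ] : z'^-1 i = inord c /\ z'^-1 j = inord c.+1.
  by apply: sigma_inversion cn up _; move: gm; rewrite zm invMg !permM sigmaV.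
have sig : sigma n c = z' * tperm i j * z'^-1.
  by have := tpermJ i j z'^-1; rewrite /conjg invgK mulgA => ->; rewrite eP eQ.
rewrite -{1}(cat_take_drop m t) word_perm_cat ed word_perm_cons word_perm_cat -!mulgA.
by congr (_ * _); rewrite sig -!mulgA mulKg tperm2 mulg1.
Qed.

Lemma reduced_subseq_exists t : valid_word n t ->
  exists2 r, subseq r t & reduced_word_of n r (word_perm n t).
Proof.
elim/last_ind: t => [_|t c IH].
  by exists [::] => //; do 2 split => //; rewrite word_perm_nil perm_length1.
rewrite /valid_word all_rcons => /andP[cn vt].
have [r rt [[vr lr] er]] := IH vt.
have := perm_length_mul_sigma (word_perm n r) cn; case: ifP => [_ up|down l_down].
  exists (rcons r c); first by rewrite -!cats1 cat_subseq.
  split; last by rewrite !word_perm_rcons er.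
  by split; rewrite ?word_perm_rcons ?size_rcons ?up ?lr //= /valid_word all_rcons cn.
have inv : ((word_perm n r)^-1 (inord c.+1) < (word_perm n r)^-1 (inord c))%N.
  have /eqP := ord_perm_neq (p := (word_perm n r)^-1) (inord_letter_lt cn).
  by rewrite neq_ltn down.
have [k kr ek] := strong_exchange vr (inord_letter_lt cn) inv.
have rem_r := rem_nth_subseq k r.
exists (rem_nth k r); first exact: subseq_trans rem_r (subseq_trans rt (subseq_rcons t c)).
split; last by rewrite word_perm_rcons -er ek.
split; first exact: all_subseq rem_r vr.
by rewrite -ek size_rem_nth // lr -l_down.
Qed.

Lemma perm_length_word_mul_le t1 t2 : valid_word n t1 -> valid_word n t2 ->
  perm_length n (word_perm n t1 * word_perm n t2) <=
  perm_length n (word_perm n t1) + perm_length n (word_perm n t2).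
Proof.
move=> /reduced_subseq_exists[r1 _ [[v1 l1] <-]] /reduced_subseq_exists[r2 _ [[v2 l2] <-]].
rewrite -l1 -l2 -size_cat -word_perm_cat; apply: perm_length_word_le.
by rewrite /valid_word all_cat; apply/andP.
Qed.

Lemma reduced_factors s s1 s2 : reduced n s -> valid_word n s1 -> valid_word n s2 ->
  word_perm n s = word_perm n s1 * word_perm n s2 -> size s1 + size s2 = size s ->
  reduced n s1 /\ reduced n s2.
Proof.
move=> [_ ls] v1 v2 es size_s; have := perm_length_word_mul_le v1 v2.
have := perm_length_word_le v1; have := perm_length_word_le v2.
by rewrite -es -ls; split; split=> //; lia.
Qed.

End Length.

Section Bruhat.

Variable n : nat.
Implicit Types (a : nat) (s t : seq nat) (x y z w : {perm 'I_n.+1}).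

Lemma bruhat_step_ltP y z : bruhat_step n y z <->
  exists i j : 'I_n.+1, [/\ (i < j)%N, z = y * tperm i j & (y^-1 i < y^-1 j)%N].
Proof.
split=> [[i [j [ij [-> lt]]]]|[i [j [ij -> up]]]].
  wlog lt_ij : i j ij lt / (i < j)%N => [hyp|].
    case: (ltngtP i j) => [|ji|/val_inj eij]; [exact: hyp| |by rewrite eij eqxx in ij].
    by rewrite tpermC in lt *; apply: hyp; rewrite // eq_sym.
  by exists i, j; rewrite -perm_length_mul_tpermE.
exists i, j; split; last by rewrite perm_length_mul_tpermE.
by apply/eqP => eij; move: ij; rewrite eij ltnn.
Qed.

Lemma subword_of_bruhat_step y z t : bruhat_step n y z -> valid_word n t ->
  word_perm n t = z -> exists2 t', subseq t' t & word_perm n t' = y.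
Proof.
move=> /bruhat_step_ltP[i [j [ij -> up]]] vt et.
have down : ((word_perm n t)^-1 j < (word_perm n t)^-1 i)%N.
  by rewrite et invMg !permM tpermV tpermL tpermR.
have [k _ ek] := strong_exchange vt ij down.
by exists (rem_nth k t); rewrite ?rem_nth_subseq // -ek et -mulgA tperm2 mulg1.
Qed.

Lemma subword_of_bruhat_le x w t : bruhat_le n x w -> valid_word n t ->
  word_perm n t = w -> exists2 t', subseq t' t & word_perm n t' = x.
Proof.
move=> xw; have {}xw := clos_rt_rtn1 _ _ _ _ xw.
elim: xw t => [|y z yz _ IH] t vt et; first by exists t.
have [t1 st1 et1] := subword_of_bruhat_step yz vt et.
have [t2 st2 et2] := IH t1 (all_subseq st1 vt) et1.
by exists t2 => //; apply: subseq_trans st2 st1.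
Qed.

Lemma bruhat_step_mul_sigma y z a : a < n -> bruhat_step n y z ->
  y * sigma n a = z \/ bruhat_step n (y * sigma n a) (z * sigma n a).
Proof.
move=> an /bruhat_step_ltP[i [j [ij -> up]]].
have ez : y * tperm i j * sigma n a = y * sigma n a * tperm (sigma n a i) (sigma n a j).
  by rewrite -tpermJ /conjg sigmaV !mulgA -(mulgA y (sigma n a)) sigma2 mulg1.
case: (ltngtP (sigma n a i) (sigma n a j)) => [sij|sji|/val_inj/perm_inj eij].
- right; rewrite ez; apply/bruhat_step_ltP; exists (sigma n a i), (sigma n a j); split=> //.
  by rewrite invMg !permM sigmaV /sigma !tpermK.
- by left; have [-> ->] := sigma_inversion an ij sji.
- by move: ij; rewrite eij ltnn.
Qed.

Lemma bruhat_le_mul_sigma x w a : a < n -> bruhat_le n x w ->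
  bruhat_le n (x * sigma n a) (w * sigma n a) \/ bruhat_le n (x * sigma n a) w.
Proof.
move=> an xw; have {}xw := clos_rt_rt1n _ _ _ _ xw.
elim: xw => [y|{}x y z xy yz IH]; first by left; apply: rt_refl.
case: (bruhat_step_mul_sigma an xy) => [->|xy']; first by right; apply: clos_rt1n_rt.
by case: IH => h; [left|right]; apply: rt_trans (rt_step _ _ _ _ xy') h.
Qed.

Lemma bruhat_le_of_subword s t : reduced n s -> subseq t s ->
  bruhat_le n (word_perm n t) (word_perm n s).
Proof.
elim/last_ind: s t => [|s c IH] t [vs ls].
  by rewrite subseq0 => /eqP ->; apply: rt_refl.
move: vs ls; rewrite /valid_word all_rcons word_perm_rcons size_rcons => /andP[cn vs] ls.
have l_s := perm_length_word_le vs.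
have l_sc := perm_length_mul_sigma_le (word_perm n s) cn.
have rs : reduced n s by split => //; lia.
have step : bruhat_step n (word_perm n s) (word_perm n s * sigma n c).
  exists (inord c), (inord c.+1); split; last by split => //; lia.
  by rewrite -val_eqE /= neq_ltn inord_letter_lt.
case/subseq_rcons_inv => [ts|[t' -> ts]].
  exact: rt_trans (IH t rs ts) (rt_step _ _ _ _ step).
rewrite word_perm_rcons; case: (bruhat_le_mul_sigma cn (IH t' rs ts)) => // h.
exact: rt_trans h (rt_step _ _ _ _ step).
Qed.

End Bruhat.

Section Parabolic.

Variable n : nat.
Implicit Types (X Y Z : pred nat) (r s t : seq nat) (a b x y u v : {perm 'I_n.+1}).

Definition in_parabolic Z x := exists t, [/\ valid_word n t, all Z t & word_perm n t = x].

Lemma in_parabolic_word Z r : valid_word n r -> all Z r -> in_parabolic Z (word_perm n r).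
Proof. by move=> vr Zr; exists r. Qed.

Lemma in_parabolic_subword Z r t : subseq t r -> valid_word n r -> all Z r ->
  in_parabolic Z (word_perm n t).
Proof.
by move=> tr vr Zr; exists t; split; [apply: all_subseq vr | apply: all_subseq Zr |].
Qed.

Lemma in_parabolic_reduced Z x :
  in_parabolic Z x -> exists2 r, reduced_word_of n r x & all Z r.
Proof.
move=> [t [vt Zt <-]]; have [r rt red_r] := reduced_subseq_exists vt.
by exists r; rewrite // (all_subseq rt).
Qed.

Lemma in_parabolicM Z x y : in_parabolic Z x -> in_parabolic Z y -> in_parabolic Z (x * y).
Proof.
move=> [t [vt Zt <-]] [t' [vt' Zt' <-]]; exists (t ++ t').
by rewrite /valid_word !all_cat -!/(valid_word n _) vt vt' Zt Zt' word_perm_cat.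
Qed.

Lemma in_parabolicV Z x : in_parabolic Z x -> in_parabolic Z x^-1.
Proof.
move=> [t [vt Zt <-]]; exists (rev t).
by rewrite /valid_word !all_rev -/(valid_word n _) vt Zt word_perm_rev.
Qed.

Lemma in_parabolic_bruhat_le Z x u : in_parabolic Z u -> bruhat_le n x u -> in_parabolic Z x.
Proof.
move=> [t [vt Zt et]] xu; have [t' t't <-] := subword_of_bruhat_le xu vt et.
exact: in_parabolic_subword t't vt Zt.
Qed.

Lemma bruhat_le_parabolic_mul_decompose X Y u v x :
  in_parabolic X u -> in_parabolic Y v -> bruhat_le n x (u * v) ->
  exists a b, [/\ bruhat_le n a u, bruhat_le n b v & a * b = x].
Proof.
move=> /in_parabolic_reduced[r1 [red1 <-] _] /in_parabolic_reduced[r2 [red2 <-] _] le_x.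
have v12 : valid_word n (r1 ++ r2).
  by rewrite /valid_word all_cat; apply/andP; split; [case: red1 | case: red2].
have [t ts <-] := subword_of_bruhat_le le_x v12 (word_perm_cat n r1 r2).
have [t1 [t2 [-> s1 s2]]] := subseq_cat_split ts.
exists (word_perm n t1), (word_perm n t2).
by split; rewrite ?word_perm_cat //; apply: bruhat_le_of_subword.
Qed.

Variables X Y : pred nat.
Hypothesis disjXY : forall i, ~ (X i /\ Y i).

(* Every point z is avoided by one of the two words, which hence cannot move it upwards. *)
Lemma in_parabolic_disjoint_eq1 x : in_parabolic X x -> in_parabolic Y x -> x = 1.
Proof.
move=> [tX [vX aX eX]] [tY [vY aY eY]]; apply: perm_eq1_of_le => z.
case: (boolP (nat_of_ord z \in tX)) => zX; last by rewrite -eX word_perm_le_letter.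
rewrite -eY word_perm_le_letter //; apply/negP => zY.
exact: disjXY z (conj (allP aX _ zX) (allP aY _ zY)).
Qed.

Lemma in_parabolic_mul_inj a b a' b' :
  in_parabolic X a -> in_parabolic Y b -> in_parabolic X a' -> in_parabolic Y b' ->
  a * b = a' * b' -> a = a' /\ b = b'.
Proof.
move=> Xa Yb Xa' Yb' e.
have e1 : a'^-1 * a = b' * b^-1.
  by rewrite -[a'^-1 * a]mulg1 -(mulgV b) mulgA -(mulgA _ a) e !mulgA mulVg mul1g.
have a'a : a'^-1 * a = 1.
  apply: in_parabolic_disjoint_eq1; first exact/in_parabolicM/Xa/in_parabolicV.
  by rewrite e1; apply/in_parabolicM/in_parabolicV.
have ea : a = a' by apply: (mulgI a'^-1); rewrite a'a mulVg.
by split=> //; apply: (mulgI a); rewrite {2}ea.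
Qed.

Lemma reduced_cat_parabolic r1 r2 :
  reduced n r1 -> all X r1 -> reduced n r2 -> all Y r2 -> reduced n (r1 ++ r2).
Proof.
move=> [v1 l1] X1 [v2 l2] Y2.
have v12 : valid_word n (r1 ++ r2) by rewrite /valid_word all_cat; apply/andP.
split=> //; have [r rs [[_ lr] er]] := reduced_subseq_exists v12.
have [q1 [q2 [eq s1 s2]]] := subseq_cat_split rs.
have [e1 e2] : word_perm n q1 = word_perm n r1 /\ word_perm n q2 = word_perm n r2.
  apply: in_parabolic_mul_inj.
  - exact: in_parabolic_subword s1 v1 X1.
  - exact: in_parabolic_subword s2 v2 Y2.
  - exact: in_parabolic_word v1 X1.
  - exact: in_parabolic_word v2 Y2.
  - by rewrite -!word_perm_cat -eq er.
have := perm_length_word_le (all_subseq s1 v1).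
have := perm_length_word_le (all_subseq s2 v2).
have := perm_length_word_le v12.
by rewrite e1 e2 -er -lr eq !size_cat; lia.
Qed.

Lemma bruhat_le_parabolic_mulE a b a' b' :
  in_parabolic X a -> in_parabolic Y b -> in_parabolic X a' -> in_parabolic Y b' ->
  bruhat_le n (a * b) (a' * b') <-> bruhat_le n a a' /\ bruhat_le n b b'.
Proof.
move=> Xa Yb /in_parabolic_reduced[r1 [red1 <-] X1] /in_parabolic_reduced[r2 [red2 <-] Y2].
have red12 := reduced_cat_parabolic red1 X1 red2 Y2.
have v1 := red1.1; have v2 := red2.1; have v12 := red12.1.
split=> [le_ab|[le_a le_b]].
  have [t ts et] := subword_of_bruhat_le le_ab v12 (word_perm_cat n r1 r2).
  have [t1 [t2 [ett s1 s2]]] := subseq_cat_split ts.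
  rewrite ett word_perm_cat in et.
  have [-> ->] : a = word_perm n t1 /\ b = word_perm n t2.
    apply: in_parabolic_mul_inj => //; first exact: in_parabolic_subword s1 v1 X1.
    exact: in_parabolic_subword s2 v2 Y2.
  by split; apply: bruhat_le_of_subword.
have [t1 s1 <-] := subword_of_bruhat_le le_a v1 erefl.
have [t2 s2 <-] := subword_of_bruhat_le le_b v2 erefl.
by rewrite -!word_perm_cat; apply: bruhat_le_of_subword; rewrite ?cat_subseq.
Qed.

End Parabolic.

Lemma bideal_inj n w (x y : Bideal n w) : sval x = sval y -> x = y.
Proof. by case: x y => [x px] [y py] /= exy; apply: subset_eq_compat. Qed.

Lemma poset_iso_prod_parabolic n (X Y : pred nat) (u v : {perm 'I_n.+1}) :
  (forall i, ~ (X i /\ Y i)) -> in_parabolic X u -> in_parabolic Y v ->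
  poset_iso_prod n (u * v) u v.
Proof.
move=> disjXY Xu Yv.
have Xp (p : Bideal n u * Bideal n v) : in_parabolic X (sval p.1).
  exact: in_parabolic_bruhat_le Xu (svalP p.1).
have Yp (p : Bideal n u * Bideal n v) : in_parabolic Y (sval p.2).
  exact: in_parabolic_bruhat_le Yv (svalP p.2).
have mul_le (p : Bideal n u * Bideal n v) : bruhat_le n (sval p.1 * sval p.2) (u * v).
  apply/(bruhat_le_parabolic_mulE disjXY (Xp p) (Yp p) Xu Yv).
  by split; [exact: (svalP p.1) | exact: (svalP p.2)].
pose g (p : Bideal n u * Bideal n v) : Bideal n (u * v) :=
  exist _ (sval p.1 * sval p.2) (mul_le p).
have g_onto (x : Bideal n (u * v)) : exists p, g p = x.
  have [a [b [au bv ex]]] := bruhat_le_parabolic_mul_decompose Xu Yv (svalP x).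
  by exists (exist _ a au, exist _ b bv); apply: bideal_inj.
pose f x := sval (constructive_indefinite_description _ (g_onto x)).
have fK : cancel f g by move=> x; rewrite /f; case: constructive_indefinite_description.
exists f; split.
  exists g => // p; case: (f (g p)) (fK (g p)) => q1 q2 /(congr1 sval) /= e.
  have [e1 e2] := in_parabolic_mul_inj disjXY (Xp (q1, q2)) (Yp (q1, q2)) (Xp p) (Yp p) e.
  by case: p e1 e2 {e} => p1 p2 /= /bideal_inj -> /bideal_inj ->.
move=> x y; rewrite -{1}(fK x) -{1}(fK y).
exact: bruhat_le_parabolic_mulE.
Qed.

Local Close Scope group_scope.

Theorem lemma3p2 (n : nat) (w : {perm 'I_n.+1}) (X Y : pred nat) (s : seq nat) :
  (forall i, supp n w i <-> (X i \/ Y i)) ->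
  (forall i, ~ (X i /\ Y i)) ->
  reduced_word_of n s w ->
  ((forall x y, X x -> Y y -> commuting x y)
   \/
   (exists x0 y0, X x0 /\ Y y0 /\ ~ commuting x0 y0 /\
      (forall x y, X x -> Y y -> ~ commuting x y -> x = x0 /\ y = y0) /\
      (forall p q, p < size s -> q < size s ->
         nth 0 s p = x0 -> nth 0 s q = y0 -> p < q))) ->
  reduced n (filter X s) /\ reduced n (filter Y s) /\
  poset_iso_prod n w (word_perm n (filter X s)) (word_perm n (filter Y s)).
Proof.
move=> supp_w disjXY [[vs ls] ew] hyp; subst w.
have XYs : all (predU X Y) s by apply/allP => c cs; apply/orP/supp_w; exists s.
have comm_YX p q : p < q < size s -> Y (nth 0 s p) -> X (nth 0 s q) ->
    commuting (nth 0 s q) (nth 0 s p).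
  move=> /andP[pq qs] Yp Xq; case: hyp => [comm_XY|[x0 [y0 [_ [_ [_ [only0 left0]]]]]]].
    exact: comm_XY.
  have [//|nc] : commuting (nth 0 s q) (nth 0 s p) \/ ~ commuting (nth 0 s q) (nth 0 s p).
    by rewrite /commuting; lia.
  have [e0 f0] := only0 _ _ Xq Yp nc.
  by have := left0 q p qs (ltn_trans pq qs) e0 f0; lia.
have vX := all_subseq (filter_subseq X s) vs.
have vY := all_subseq (filter_subseq Y s) vs.
have es := word_perm_filter_split vs XYs disjXY comm_YX.
have [redX redY] := reduced_factors (conj vs ls) vX vY es (size_filter_disjoint disjXY XYs).
do 2 split=> //; rewrite es.
by apply: poset_iso_prod_parabolic => //; apply: in_parabolic_word => //; apply: filter_all.
Qed.
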